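(* Let $\mathcal{A}\subset M_n(\mathbb{F}_q)$ be an $\mathbb{F}_q$-subalgebra of dimension $m$ with basis $v_1,\dots,v_m$, let $\mathbb{G}$ be its multiplicative group as an algebraic group over $\mathbb{F}_q$, let $A(\mathbf{t})=\sum_{i=1}^mt_iv_i$ with indeterminates $\mathbf{t}=(t_1,\dots,t_m)$, and let $d=\det A(\mathbf{t})$. Let $L$ be an infinite field containing $\mathbb{F}_q$, let $p\in L[\mathbf{t},1/d]$ be nonzero, and let $B\in\mathbb{G}(L)$. Then there exists $\boldsymbol\xi\in L^m$ with $d(\boldsymbol\xi)\neq0$ and $p(\boldsymbol\xi)\ne0$ such that $A(\boldsymbol\xi)$ is Frobenius-equivalent to $B$ in $\mathbb{G}(L)$, i.e. $A(\boldsymbol\xi)=Y^{-1}BY^{(q)}$ for some $Y\in\mathbb{G}(L)$.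
   Context: For a commutative $\mathbb{F}_q$-algebra $L$, $\mathbb{G}(L)=(\mathcal{A}\otimes_{\mathbb{F}_q}L)^\times$, viewed as invertible matrices in the $L$-span of $\mathcal{A}$ in $M_n(L)$; $Y^{(q)}$ is the entrywise $q$-th power. *)

From HB Require Import structures.
From mathcomp Require Import all_boot all_order all_algebra all_field.
From mathcomp Require Import mpoly.
Set Implicit Arguments. Unset Strict Implicit. Unset Printing Implicit Defensive.
Import Order.TTheory GRing.Theory.
Local Open Scope ring_scope.

(* F plays the role of F_q (q = #|F|); L is a field with an embedding
   iota : F -> L.  The subalgebra A of M_n(F) is given by a basis v. *)

Definition mx_free (F : fieldType) (n m : nat) (v : 'I_m -> 'M[F]_n) : Prop :=
  forall c : 'I_m -> F, \sum_(i < m) c i *: v i = 0 -> forall i, c i = 0.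

Definition in_span (R : comNzRingType) (n m : nat) (v : 'I_m -> 'M[R]_n)
  (X : 'M[R]_n) : Prop :=
  exists c : 'I_m -> R, X = \sum_(i < m) c i *: v i.

Definition is_subalg_basis (F : fieldType) (n m : nat) (v : 'I_m -> 'M[F]_n) : Prop :=
  [/\ mx_free v, in_span v 1%:M & forall i j, in_span v (v i *m v j)].

(* G(L) = (A (x)_F L)^x : invertible matrices in the L-span of A inside M_n(L) *)
Definition GL_pts (F L : fieldType) (iota : {rmorphism F -> L}) (n m : nat)
  (v : 'I_m -> 'M[F]_n) (Y : 'M[L]_n) : Prop :=
  in_span (fun i => map_mx iota (v i)) Y /\ Y \in unitmx.

Definition Aeval (F L : fieldType) (iota : {rmorphism F -> L}) (n m : nat)
  (v : 'I_m -> 'M[F]_n) (xi : 'I_m -> L) : 'M[L]_n :=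
  \sum_(i < m) xi i *: map_mx iota (v i).

Definition Agen (F L : fieldType) (iota : {rmorphism F -> L}) (n m : nat)
  (v : 'I_m -> 'M[F]_n) : 'M[{mpoly L[m]}]_n :=
  \matrix_(a, b) \sum_(i < m) 'X_i * (iota (v i a b))%:MP.

Definition dgen (F L : fieldType) (iota : {rmorphism F -> L}) (n m : nat)
  (v : 'I_m -> 'M[F]_n) : {mpoly L[m]} := \det (Agen iota v).

Definition frobq (L : fieldType) (q n : nat) (Y : 'M[L]_n) : 'M[L]_n :=
  map_mx (fun x => x ^+ q) Y.

From HB Require Import structures.
From mathcomp Require Import all_boot all_order all_algebra all_field.
From mathcomp Require Import pgroup abelian mpoly.
Set Implicit Arguments. Unset Strict Implicit. Unset Printing Implicit Defensive.
Import GRing.Theory.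
Local Open Scope ring_scope.

(* Let b be the coordinates of B and, for w in L^m, put T := - A(w) B^-1 and
   Y := (1 - sT)^-1.  The Frobenius conjugate
     Y^-1 B Y^(q) = (1 - sT) B (1 - s^q T^(q))^-1
   stays in the span of the v_i and, since q > 1, its coordinates are b + U(s)/D(s)
   for polynomials with U(0) = 0, U'(0) = w and D(0) = 1: a rational curve through b
   with tangent w.  If w avoids the zeros of the lowest-degree form h of f(b + t), of
   degree r, then f(b + U(s)/D(s)) D(s)^N = s^r (h(w) + O(s)) is a nonzero polynomial,
   and an infinite field has an s where it, D(s) and det(1 - sT) do not vanish.  The
   determinant d is then nonzero because the conjugate is invertible. *)

Section LastVariable.
Variables (R : comNzRingType) (n : nat).

Definition mnm_init (m : 'X_{1..n.+1}) : 'X_{1..n} :=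
  [multinom m (widen_ord (leqnSn n) i) | i < n].

Definition snoc_fun (w : 'I_n -> R) (x : R) (i : 'I_n.+1) : R :=
  if insub (val i) is Some j then w j else x.

Definition mcoeff_last (p : {mpoly R[n.+1]}) (k : nat) : {mpoly R[n]} :=
  \sum_(m <- msupp p | m ord_max == k) p@_m *: 'X_[mnm_init m].

Lemma mnm_init_inj (m1 m2 : 'X_{1..n.+1}) :
  mnm_init m1 = mnm_init m2 -> m1 ord_max = m2 ord_max -> m1 = m2.
Proof.
move=> e_init e_last; apply/mnmP => i; case: (unliftP ord_max i) => [j ->|->] //.
have := congr1 (fun m : 'X_{1..n} => m j) e_init; rewrite !mnmE.
by congr (_ = _); congr (_ _); apply: val_inj; rewrite /= /bump leqNgt ltn_ord.
Qed.

Lemma mcoeff_mcoeff_last p m :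
  m \in msupp p -> (mcoeff_last p (m ord_max))@_(mnm_init m) = p@_m.
Proof.
move=> m_supp; rewrite raddf_sum /= big_mkcond (bigD1_seq m) ?msupp_uniq //=.
rewrite eqxx mcoeffZ mcoeffX eqxx mulr1 big1 ?addr0 // => m' m'm.
case: eqP => // e_last; rewrite mcoeffZ mcoeffX.
case: eqP => [e_init|]; last by rewrite mulr0.
by case/eqP: m'm; apply: mnm_init_inj.
Qed.

Lemma meval_snoc_fun p w x :
  p.@[snoc_fun w x] = \sum_(k < msize p) (mcoeff_last p k).@[w] * x ^+ k.
Proof.
under eq_bigr do rewrite raddf_sum /= big_mkcond /= mulr_suml.
rewrite exchange_big mevalE /=; apply: eq_big_seq => m m_supp.
have m_lt : (m ord_max < msize p)%N.
  apply: leq_ltn_trans (msize_mdeg_lt m_supp).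
  by rewrite mdegE (bigD1 ord_max) //= leq_addr.
rewrite (bigD1 (Ordinal m_lt)) //= eqxx [X in _ + X]big1 ?addr0 => [|k k_ne]; last first.
  by rewrite ifF ?mul0r //; apply: contraNF k_ne => /eqP e; apply/eqP/val_inj.
rewrite mevalZ mevalX big_ord_recr /= -mulrA; congr (_ * (_ * _)).
  apply: eq_bigr => i _; rewrite mnmE /snoc_fun insubT /= => [|i_lt]; first exact: ltn_ord.
  by congr (w _ ^+ _); apply: val_inj.
by rewrite /snoc_fun insubF //= ltnn.
Qed.

End LastVariable.

Lemma mpoly_nvar0E (R : comNzRingType) (p : {mpoly R[0]}) v : p = (p.@[v])%:MP.
Proof.
have m0 (m : 'X_{1..0}) : m = 0%MM by apply/mnmP => -[].
rewrite {1}(mpolyE p) mevalE raddf_sum /=; apply: eq_bigr => m _.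
by rewrite (m0 m) mpolyX0 big_ord0 mulr1 -mul_mpolyC mulr1.
Qed.

Lemma drop1_polyE (R : nzRingType) (p : {poly R}) : p = drop_poly 1 p * 'X + (p`_0)%:P.
Proof.
rewrite -{1}(poly_take_drop 1 p) expr1 addrC; congr (_ + _).
by apply/polyP => -[|i]; rewrite coef_take_poly coefC.
Qed.

Section RationalCurve.
Variables (L : fieldType) (n : nat).
Implicit Types (g : {mpoly L[n]}) (U : 'I_n -> {poly L}) (D : {poly L}).

Definition mshift (b : 'I_n -> L) g : {mpoly L[n]} :=
  g \mPo [tuple (b i)%:MP + 'X_i | i < n].

Lemma meval_mshift b g y : (mshift b g).@[y] = g.@[fun i => b i + y i].
Proof.
rewrite comp_mpoly_meval; apply: meval_eq => i.
by rewrite tnth_mktuple mevalD mevalC mevalXU.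
Qed.

(* msize g exceeds every mdeg m with m in the support, so the subtraction is exact. *)
Definition curve_poly g U D : {poly L} :=
  \sum_(m <- msupp g) g@_m *: (\prod_(i < n) U i ^+ m i * D ^+ (msize g - mdeg m)).

Lemma horner_curve_poly g U D s : D.[s] != 0 ->
  (curve_poly g U D).[s] = g.@[fun i => (U i).[s] / D.[s]] * D.[s] ^+ msize g.
Proof.
move=> Ds_neq0; rewrite horner_sum mevalE mulr_suml; apply: eq_big_seq => m m_supp.
rewrite hornerZ hornerM horner_prod horner_exp -mulrA; congr (_ * _).
rewrite (expfB _ (msize_mdeg_lt m_supp)) mdegE -prodrXr mulrCA mulrC -prodfV -big_split.
by congr (_ * _); apply: eq_bigr => i _; rewrite horner_exp exprMn exprVn.
Qed.

Lemma horner_pihomog r g z :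
  (pihomog mdeg r g).@[z] = \sum_(m <- msupp g | mdeg m == r) g@_m * \prod_i z i ^+ m i.
Proof. by rewrite pihomogE raddf_sum /=; apply: eq_bigr => m _; rewrite mevalZ mevalX. Qed.

Lemma mcoeff_pihomog g m : m \in msupp g -> (pihomog mdeg (mdeg m) g)@_m = g@_m.
Proof.
move=> m_supp; rewrite pihomogE raddf_sum /= big_mkcond (bigD1_seq m) ?msupp_uniq //=.
rewrite eqxx mcoeffZ mcoeffX eqxx mulr1 big1 ?addr0 // => m' m'_neq.
by case: ifP => // _; rewrite mcoeffZ mcoeffX (negbTE m'_neq) mulr0.
Qed.

Definition mlowest g : {mpoly L[n]} := pihomog mdeg (mdeg (mlast g)) g.

Lemma mlowest_neq0 g : g != 0 -> mlowest g != 0.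
Proof.
move=> g_neq0; apply: contraTneq (mlast_supp g_neq0) => low0.
by rewrite mcoeff_msupp -mcoeff_pihomog ?mlast_supp // -/(mlowest g) low0 mcoeff0 eqxx.
Qed.

Lemma curve_poly_neq0 g U D :
  D.[0] = 1 -> (forall i, (U i)`_0 = 0) -> (mlowest g).@[fun i => (U i)`_1] != 0 ->
  curve_poly g U D != 0.
Proof.
rewrite /mlowest; set r := mdeg (mlast g) => D0 U0 h_neq0.
have r_min m : m \in msupp g -> (r <= mdeg m)%N.
  by move=> m_supp; apply/lemc_mdeg/mlast_lemc.
pose Q i := drop_poly 1 (U i).
have UE i : U i = Q i * 'X by rewrite {1}[U i]drop1_polyE U0 addr0.
pose K := \sum_(m <- msupp g)
  g@_m *: ('X^(mdeg m - r) * \prod_(i < n) Q i ^+ m i * D ^+ (msize g - mdeg m)).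
have curveE : curve_poly g U D = 'X^r * K.
  rewrite mulr_sumr; apply: eq_big_seq => m m_supp; rewrite -scalerAr !mulrA -exprD.
  rewrite subnKC ?r_min //; congr (_ *: (_ * _)).
  rewrite mdegE -prodrXr -big_split /=; apply: eq_bigr => i _.
  by rewrite UE exprMn mulrC.
suff K0_neq0 : K.[0] != 0.
  rewrite curveE mulf_neq0 ?expf_neq0 ?polyX_eq0 //.
  by apply: contraNneq K0_neq0 => ->; rewrite horner0.
rewrite horner_sum; move: h_neq0; rewrite horner_pihomog big_mkcond /=.
congr (_ != 0); apply: eq_big_seq => m m_supp.
rewrite hornerZ !hornerM horner_prod hornerXn horner_exp D0 expr1n mulr1 expr0n subn_eq0.
rewrite eqn_leq r_min ?andbT //; case: (mdeg m <= r)%N; last by rewrite mul0r mulr0.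
rewrite mul1r; congr (_ * _); apply: eq_bigr => i _.
by rewrite horner_exp /Q horner_coef0 coef_drop_poly.
Qed.

End RationalCurve.

Section InfiniteField.
Variable L : fieldType.
Hypothesis L_infinite : forall s : seq L, exists x : L, x \notin s.

Lemma poly_nonroot (p : {poly L}) : p != 0 -> exists x, p.[x] != 0.
Proof.
move=> p_neq0; have [s [s_uniq s_size]] : exists s : seq L, uniq s /\ size s = size p.
  elim: (size p) => [|k [s [s_uniq <-]]]; first by exists [::].
  by have [x xNs] := L_infinite s; exists (x :: s); rewrite /= xNs.
have [s_roots | /allPn[x _ x_root]] := boolP (all (root p) s); last by exists x.
by have := max_poly_roots p_neq0 s_roots s_uniq; rewrite s_size ltnn.
Qed.

Lemma mpoly_nonroot n (p : {mpoly L[n]}) : p != 0 -> exists v, p.@[v] != 0.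
Proof.
elim: n p => [|n IHn] p p_neq0.
  exists (fun _ => 0); apply: contra p_neq0 => /eqP p0.
  by rewrite (mpoly_nvar0E p (fun _ => 0)) p0.
have m0_supp := mlead_supp p_neq0; set m0 := mlead p in m0_supp.
have [w w_nonroot] : exists w, (mcoeff_last p (m0 ord_max)).@[w] != 0.
  apply: IHn; apply: contraTneq (m0_supp) => p0.
  by rewrite mcoeff_msupp -(mcoeff_mcoeff_last m0_supp) p0 mcoeff0 eqxx.
pose pw : {poly L} := \poly_(k < msize p) (mcoeff_last p k).@[w].
have [x x_nonroot] : exists x, pw.[x] != 0.
  apply: poly_nonroot; apply: contra_neq w_nonroot => pw0.
  have m0_lt : (m0 ord_max < msize p)%N.
    apply: leq_ltn_trans (msize_mdeg_lt m0_supp).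
    by rewrite mdegE (bigD1 ord_max) //= leq_addr.
  by have := congr1 (coefp (m0 ord_max)) pw0; rewrite /= coef_poly m0_lt coef0.
by rewrite horner_poly in x_nonroot; exists (snoc_fun w x); rewrite meval_snoc_fun.
Qed.

Lemma mshift_neq0 n (b : 'I_n -> L) (g : {mpoly L[n]}) : g != 0 -> mshift b g != 0.
Proof.
move=> /mpoly_nonroot[x gx_neq0]; apply: contra_neq gx_neq0 => shift0.
rewrite (meval_eq (v2 := fun i => b i + (x i - b i))) => [|i]; last by rewrite addrC subrK.
by rewrite -meval_mshift shift0 meval0.
Qed.

End InfiniteField.

Section PolyMatrix.
Variables (L : fieldType) (l : {scalar {poly L}}).

Lemma map_mx_polyC_mull m n p (K : 'M[L]_(m, n)) (M : 'M[{poly L}]_(n, p)) :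
  map_mx l (map_mx polyC K *m M) = K *m map_mx l M.
Proof.
apply/matrixP => i j; rewrite !mxE raddf_sum; apply: eq_bigr => k _.
by rewrite !mxE mul_polyC; exact: linearZ.
Qed.

Lemma map_mx_polyC_mulr m n p (M : 'M[{poly L}]_(m, n)) (K : 'M[L]_(n, p)) :
  map_mx l (M *m map_mx polyC K) = map_mx l M *m K.
Proof.
apply/matrixP => i j; rewrite !mxE raddf_sum; apply: eq_bigr => k _.
by rewrite !mxE mulrC mul_polyC mulrC; exact: linearZ.
Qed.

End PolyMatrix.

Lemma coef1_comp_polyXn (R : nzRingType) (p : {poly R}) k :
  (1 < k)%N -> (p \Po 'X^k)`_1 = 0.
Proof.
by move=> k_gt1; rewrite coef_comp_poly_Xn ?dvdn1 ?gtn_eqF // ltnW.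
Qed.

Lemma invmx_horner (L : fieldType) n (Y : 'M[L]_n.+1) : Y \in unitmx ->
  invmx Y = horner_mx Y (- ((char_poly Y)`_0)^-1 *: drop_poly 1 (char_poly Y)).
Proof.
set p := char_poly Y => Y_unit.
have p0_neq0 : p`_0 != 0.
  by rewrite /p char_poly_det mulf_eq0 negb_or signr_eq0 -unitfE -unitmxE.
have : horner_mx Y p = 0 := Cayley_Hamilton Y.
rewrite {1}[p]drop1_polyE rmorphD rmorphM /= horner_mx_X horner_mx_C => /eqP.
rewrite addr_eq0 -mulmxE => /eqP hY; rewrite linearZ /= -[LHS]mul1mx.
suff <- : (- (p`_0)^-1 *: horner_mx Y (drop_poly 1 p)) *m Y = 1%:M by rewrite mulmxK.
by rewrite -scalemxAl hY scalerN scaleNr opprK scale_scalar_mx mulVf.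
Qed.

Lemma invmx_closed (L : fieldType) n (S : 'M[L]_n -> Prop) :
    S 1%:M -> (forall X Y, S X -> S Y -> S (X + Y)) ->
    (forall a X, S X -> S (a *: X)) -> (forall X Y, S X -> S Y -> S (X *m Y)) ->
  forall Y, S Y -> S (invmx Y).
Proof.
move=> S1 SD SZ SM Y SY; have [Y_unit|] := boolP (Y \in unitmx); last first.
  by move=> Y_nonunit; rewrite /invmx (negbTE Y_nonunit).
case: n S S1 SD SZ SM Y SY Y_unit => [|n] S S1 SD SZ SM Y SY Y_unit.
  by rewrite (flatmx0 (invmx Y)) -(flatmx0 (0 *: Y)); apply: SZ.
rewrite invmx_horner //; move: (_ *: _) => p.
elim/poly_ind: p => [|p c Sp]; first by rewrite rmorph0 -(scale0r Y); apply: SZ.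
rewrite rmorphD rmorphM /= horner_mx_X horner_mx_C -scalemx1.
by apply: SD; [apply: SM | apply: SZ].
Qed.

Lemma pchar_nat_card (F : finFieldType) (L : fieldType) (iota : {rmorphism F -> L}) :
  [pchar L].-nat #|F|.
Proof.
have [p p_prime pcharFp] := finPcharP F.
have /abelem_pgroup := fin_ring_pchar_abelem pcharFp; rewrite /pgroup cardsT.
by apply: sub_in_pnat => r _; rewrite inE /= => /eqP ->; rewrite (fmorph_pchar iota).
Qed.

Section FrobeniusPower.
Variables (L : fieldType) (q : nat).
Hypothesis q_pchar : [pchar L].-nat q.

Definition powq (x : L) := x ^+ q.

Fact powq_is_nmod_morphism : nmod_morphism powq.
Proof.
split; last by move=> x y; rewrite /powq exprDn_pchar.
by rewrite /powq expr0n; case: q q_pchar.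
Qed.
HB.instance Definition _ := GRing.isNmodMorphism.Build L L powq powq_is_nmod_morphism.

Fact powq_is_monoid_morphism : monoid_morphism powq.
Proof. by split=> [|x y]; rewrite /powq ?expr1n ?exprMn. Qed.
HB.instance Definition _ := GRing.isMonoidMorphism.Build L L powq powq_is_monoid_morphism.

Lemma frobq_invmx n (Y : 'M[L]_n) : frobq q (invmx Y) = invmx (frobq q Y).
Proof. exact: (map_invmx powq). Qed.

Lemma frobq_unitmx n (Y : 'M[L]_n) : (frobq q Y \in unitmx) = (Y \in unitmx).
Proof. exact: (map_unitmx powq). Qed.

Lemma frobq_pencil n (a : L) (X : 'M[L]_n) :
  frobq q (1%:M - a *: X) = 1%:M - a ^+ q *: frobq q X.
Proof. by rewrite /frobq (map_mxB powq) (map_mx1 powq) (map_mxZ powq). Qed.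

Lemma frobq_lincomb n k (c : 'I_k -> L) (X : 'I_k -> 'M[L]_n) :
  frobq q (\sum_i c i *: X i) = \sum_i c i ^+ q *: frobq q (X i).
Proof.
rewrite /frobq (raddf_sum (map_mx powq)); apply: eq_bigr => i _.
exact: (map_mxZ powq).
Qed.

End FrobeniusPower.

Section SubalgebraSpan.
Variables (F L : fieldType) (iota : {rmorphism F -> L}) (n m : nat).
Variable v : 'I_m -> 'M[F]_n.

Local Notation span := (in_span (fun i => map_mx iota (v i))).

Lemma span_Aeval c : span (Aeval iota v c).
Proof. by exists c. Qed.

Lemma span0 : span 0.
Proof. by exists (fun _ => 0); rewrite big1 // => i _; rewrite scale0r. Qed.

Lemma spanD X Y : span X -> span Y -> span (X + Y).
Proof.
move=> [a ->] [b ->]; exists (fun i => a i + b i).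
by rewrite -big_split; apply: eq_bigr => i _; rewrite scalerDl.
Qed.

Lemma spanZ c X : span X -> span (c *: X).
Proof.
move=> [a ->]; exists (fun i => c * a i).
by rewrite scaler_sumr; apply: eq_bigr => i _; rewrite scalerA.
Qed.

Lemma span_sum (I : Type) (r : seq I) (P : pred I) (G : I -> 'M[L]_n) :
  (forall i, P i -> span (G i)) -> span (\sum_(i <- r | P i) G i).
Proof. by move=> spanG; apply: big_ind => //; [exact: span0 | exact: spanD]. Qed.

Lemma span_map_mx (X : 'M[F]_n) : in_span v X -> span (map_mx iota X).
Proof.
move=> [a ->]; exists (fun i => iota (a i)).
by rewrite raddf_sum /=; apply: eq_bigr => i _; rewrite map_mxZ.
Qed.

Hypothesis v_subalg : is_subalg_basis v.

Lemma span1 : span 1%:M.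
Proof. by case: v_subalg => _ span1 _; rewrite -(map_mx1 iota); apply: span_map_mx. Qed.

Lemma spanM X Y : span X -> span Y -> span (X *m Y).
Proof.
move=> [a ->] [b ->]; rewrite mulmx_suml; apply: span_sum => i _.
rewrite mulmx_sumr; apply: span_sum => j _; rewrite -scalemxAl -scalemxAr.
by do 2!apply: spanZ; rewrite -map_mxM; apply: span_map_mx; case: v_subalg.
Qed.

Lemma span_invmx Y : span Y -> span (invmx Y).
Proof. exact: (@invmx_closed _ _ span span1 spanD spanZ spanM). Qed.

Definition basis_mx : 'M[F]_(m, n * n) := \matrix_(i < m) mxvec (v i).

Definition coords (X : 'M[L]_n) (i : 'I_m) : L :=
  (mxvec X *m pinvmx (map_mx iota basis_mx)) 0 i.

Lemma mxvec_Aeval c : mxvec (Aeval iota v c) = \row_i c i *m map_mx iota basis_mx.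
Proof.
rewrite linear_sum mulmx_sum_row; apply: eq_bigr => i _.
by rewrite linearZ /= mxE -map_row rowK map_mxvec.
Qed.

Lemma coordsK c : coords (Aeval iota v c) =1 c.
Proof.
have free_basis : row_free (map_mx iota basis_mx).
  rewrite row_free_map; apply/inj_row_free => u u_basis; apply/rowP => i.
  case: v_subalg => v_free _ _; rewrite mxE; apply: v_free i.
  apply: (can_inj mxvecK); rewrite linear0 linear_sum -[RHS]u_basis mulmx_sum_row.
  by apply: eq_bigr => j _; rewrite linearZ /= rowK.
by move=> i; rewrite /coords mxvec_Aeval -mulmxA mulmxVp // mulmx1 mxE.
Qed.

Lemma Aeval_coords X : span X -> Aeval iota v (coords X) = X.
Proof. by move=> [c ->]; apply: eq_bigr => i _; rewrite -/(Aeval iota v c) coordsK. Qed.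

Lemma coordsZ a X i : coords (a *: X) i = a * coords X i.
Proof. by rewrite /coords linearZ /= -scalemxAl mxE. Qed.

Definition poly_coords (P : 'M[{poly L}]_n) (i : 'I_m) : {poly L} :=
  (mxvec P *m map_mx polyC (pinvmx (map_mx iota basis_mx))) 0 i.

Lemma map_poly_coords (l : {scalar {poly L}}) P i :
  l (poly_coords P i) = coords (map_mx l P) i.
Proof.
by rewrite /poly_coords /coords -map_mxvec -(map_mx_polyC_mulr l) [RHS]mxE.
Qed.

End SubalgebraSpan.

Lemma dgen_eval (F L : fieldType) (iota : {rmorphism F -> L}) n m (v : 'I_m -> 'M[F]_n) xi :
  (dgen iota v).@[xi] = \det (Aeval iota v xi).
Proof.
rewrite /dgen -det_map_mx; congr (\det _); apply/matrixP => a b.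
rewrite !mxE /Aeval summxE raddf_sum /=; apply: eq_bigr => i _.
by rewrite mevalM mevalXU mevalC !mxE.
Qed.

Section FrobeniusTwist.
Variables (F : finFieldType) (L : fieldType) (iota : {rmorphism F -> L}) (n m : nat).
Variable v : 'I_m -> 'M[F]_n.
Hypothesis v_subalg : is_subalg_basis v.

Local Notation q := #|F|.
Local Notation span := (in_span (fun i => map_mx iota (v i))).
Let q_pchar := pchar_nat_card iota.
Let q_gt1 : (1 < q)%N := finNzRing_gt1 F.

Lemma frobq_Aeval c : frobq q (Aeval iota v c) = Aeval iota v (fun i => c i ^+ q).
Proof.
rewrite /Aeval frobq_lincomb //; apply: eq_bigr => i _; congr (_ *: _).
by apply/matrixP => a b; rewrite !mxE -rmorphXn expf_card.
Qed.

Lemma span_frobq X : span X -> span (frobq q X).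
Proof. by move=> [c ->]; rewrite -/(Aeval iota v c) frobq_Aeval; apply: span_Aeval. Qed.

Variables (B : 'M[L]_n) (w : 'I_m -> L).
Hypothesis B_GL : GL_pts iota v B.

Let T := - (Aeval iota v w *m invmx B).
Let pencil : 'M[{poly L}]_n := 1%:M - 'X *: map_mx polyC T.
Let frob_pencil : 'M[{poly L}]_n :=
  map_mx (comp_poly 'X^q) (1%:M - 'X *: map_mx polyC (frobq q T)).
Let num := pencil *m map_mx polyC B *m \adj frob_pencil.
Let den := \det frob_pencil.

Lemma span_pencil s : span (1%:M - s *: T).
Proof.
have [span_B _] := B_GL; rewrite -scaleNr; apply: spanD; first exact: span1.
apply/spanZ; rewrite /T -scaleN1r; apply/spanZ/spanM => //; first exact: span_Aeval.
exact: span_invmx.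
Qed.

Lemma horner_pencil s : map_mx (horner_eval s) pencil = 1%:M - s *: T.
Proof. by apply/matrixP => i j; rewrite !mxE horner_evalE !hornerE hornerMn hornerC. Qed.

Lemma horner_frob_pencil s :
  map_mx (horner_eval s) frob_pencil = 1%:M - s ^+ q *: frobq q T.
Proof.
apply/matrixP => i j; rewrite !mxE horner_evalE horner_comp hornerXn.
by rewrite !hornerE hornerMn hornerC.
Qed.

Lemma horner_num s :
  map_mx (horner_eval s) num = (1%:M - s *: T) *m B *m \adj (1%:M - s ^+ q *: frobq q T).
Proof.
rewrite !map_mxM horner_pencil map_mx_adj horner_frob_pencil; congr (_ *m _ *m _).
by apply/matrixP => i j; rewrite !mxE /= horner_evalE hornerC.
Qed.

Lemma horner_det_pencil s : (\det pencil).[s] = \det (1%:M - s *: T).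
Proof. by rewrite -horner_pencil det_map_mx. Qed.

Lemma horner_den s : den.[s] = \det (1%:M - s ^+ q *: frobq q T).
Proof. by rewrite -horner_frob_pencil det_map_mx. Qed.

Let coefp0E (M : 'M[{poly L}]_n) : map_mx (coefp 0) M = map_mx (horner_eval 0) M.
Proof. by apply: eq_map_mx => p; rewrite /= horner_evalE horner_coef0. Qed.

Let zero_expq : (0 : L) ^+ q = 0.
Proof. by rewrite expr0n gtn_eqF // ltnW. Qed.

Lemma horner_den0 : den.[0] = 1.
Proof. by rewrite horner_den zero_expq scale0r subr0 det1. Qed.

Lemma coef_num0 : map_mx (coefp 0) num = B.
Proof. by rewrite coefp0E horner_num zero_expq !scale0r subr0 adj1 mul1mx mulmx1. Qed.

Lemma coef_num1 : map_mx (coefp 1) num = Aeval iota v w.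
Proof.
have [_ B_unit] := B_GL.
have adj_coef0 : map_mx (coefp 0) (\adj frob_pencil) = 1%:M.
  by rewrite coefp0E map_mx_adj horner_frob_pencil zero_expq scale0r subr0 adj1.
have adj_coef1 : map_mx (coefp 1) (\adj frob_pencil) = 0.
  by apply/matrixP => i j; rewrite /frob_pencil -map_mx_adj !mxE /= coef1_comp_polyXn.
have -> : num = map_mx polyC B *m \adj frob_pencil
                - 'X *: (map_mx polyC (T *m B) *m \adj frob_pencil).
  by rewrite /num /pencil !mulmxBl !mul1mx -!scalemxAl map_mxM.
rewrite map_mxB !map_mx_polyC_mull adj_coef1 mulmx0 sub0r.
have -> : map_mx (coefp 1) ('X *: (map_mx polyC (T *m B) *m \adj frob_pencil))
          = map_mx (coefp 0) (map_mx polyC (T *m B) *m \adj frob_pencil).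
  by apply/matrixP => i j; rewrite !mxE /= coefXM.
by rewrite map_mx_polyC_mull adj_coef0 mulmx1 /T mulNmx -mulmxA mulVmx // mulmx1 opprK.
Qed.

Lemma coef_den1 : den`_1 = 0.
Proof. by rewrite /den /frob_pencil det_map_mx /= coef1_comp_polyXn. Qed.

Lemma frobenius_twist s :
  \det (1%:M - s *: T) != 0 -> den.[s] != 0 ->
  exists2 Y, GL_pts iota v Y &
    invmx Y *m B *m frobq q Y = den.[s]^-1 *: map_mx (horner_eval s) num.
Proof.
move=> detM_neq0 den_neq0; set M := 1%:M - s *: T.
have M_unit : M \in unitmx by rewrite unitmxE unitfE.
have Mq_unit : 1%:M - s ^+ q *: frobq q T \in unitmx by rewrite unitmxE unitfE -horner_den.
exists (invmx M).
  by split; [apply: span_invmx; last apply: span_pencil | rewrite unitmx_inv].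
rewrite invmxK frobq_invmx // frobq_pencil // horner_num /invmx Mq_unit -horner_den.
by rewrite scalemxAr.
Qed.

Lemma frobenius_orbit_curve :
  exists (U : 'I_m -> {poly L}) (D E : {poly L}),
  [/\ D.[0] = 1, E != 0, forall i, (U i)`_0 = 0, forall i, (U i)`_1 = w i &
    forall s, D.[s] != 0 -> E.[s] != 0 ->
    exists2 Y, GL_pts iota v Y & invmx Y *m B *m frobq q Y =
      Aeval iota v (fun i => coords iota v B i + (U i).[s] / D.[s])].
Proof.
pose b := coords iota v B; pose U i := poly_coords iota v num i - (b i)%:P * den.
have E0 : (\det pencil).[0] = 1 by rewrite horner_det_pencil scale0r subr0 det1.
exists U, den, (\det pencil); split=> [||i|i|s den_neq0 detM_neq0].
- exact: horner_den0.
- by apply: contra_eq_neq E0 => ->; rewrite horner0 eq_sym oner_neq0.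
- rewrite coefB coefCM -[den`_0]horner_coef0 horner_den0 mulr1.
  by rewrite -[_`_0]/(coefp 0 _) map_poly_coords coef_num0 subrr.
- rewrite coefB coefCM coef_den1 mulr0 subr0 -[_`_1]/(coefp 1 _) map_poly_coords coef_num1.
  exact: coordsK.
rewrite horner_det_pencil in detM_neq0.
have [Y Y_GL XE] := frobenius_twist detM_neq0 den_neq0; exists Y => //.
have span_X : span (invmx Y *m B *m frobq q Y).
  have [[span_Y _] [span_B _]] := (Y_GL, B_GL).
  apply: (spanM v_subalg); last exact: span_frobq.
  by apply: (spanM v_subalg) span_B; apply: span_invmx.
rewrite -(Aeval_coords v_subalg span_X) XE; apply: eq_bigr => i _; congr (_ *: _).
rewrite coordsZ -map_poly_coords /= horner_evalE /U hornerD hornerN hornerCM.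
by rewrite mulrBl -mulrA divff // mulr1 addrC subrK mulrC.
Qed.

End FrobeniusTwist.

Theorem lemma4p8 (F : finFieldType) (L : fieldType) (iota : {rmorphism F -> L})
  (n m : nat) (v : 'I_m -> 'M[F]_n) (f : {mpoly L[m]}) (k : nat) (B : 'M[L]_n) :
  is_subalg_basis v ->
  (forall s : seq L, exists x : L, x \notin s) ->
  f != 0 ->
  GL_pts iota v B ->
  exists xi : 'I_m -> L,
    [/\ (dgen iota v).@[xi] != 0,
        f.@[xi] / (dgen iota v).@[xi] ^+ k != 0 &
        exists Y : 'M[L]_n, GL_pts iota v Y /\
          Aeval iota v xi = invmx Y *m B *m frobq #|F| Y].
Proof.
move=> v_subalg L_infinite f_neq0 B_GL; pose b := coords iota v B; pose g := mshift b f.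
have g_neq0 : g != 0 by apply: mshift_neq0.
have [w h_w] := mpoly_nonroot L_infinite (mlowest_neq0 g_neq0).
have [U [D [E [D0 E_neq0 U0 U1 orbit]]]] := frobenius_orbit_curve v_subalg w B_GL.
have R_neq0 : curve_poly g U D != 0.
  by apply: curve_poly_neq0 => //; rewrite (meval_eq _ U1).
have D_neq0 : D != 0 by apply: contra_eq_neq D0 => ->; rewrite horner0 eq_sym oner_neq0.
have [s] : exists s, (curve_poly g U D * D * E).[s] != 0.
  by apply: (poly_nonroot L_infinite); rewrite !mulf_neq0.
rewrite !hornerM !mulf_eq0 !negb_or => /andP[/andP[Rs_neq0 Ds_neq0] Es_neq0].
have [Y [span_Y Y_unit] XE] := orbit s Ds_neq0 Es_neq0.
have [_ B_unit] := B_GL; pose xi i := b i + (U i).[s] / D.[s].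
have d_neq0 : (dgen iota v).@[xi] != 0.
  rewrite dgen_eval -XE -unitfE -unitmxE !unitmx_mul unitmx_inv.
  by rewrite (frobq_unitmx (pchar_nat_card iota)) Y_unit B_unit.
exists xi; split=> //; last by exists Y; split.
have -> : f.@[xi] = g.@[fun i => (U i).[s] / D.[s]] by rewrite meval_mshift.
rewrite mulf_neq0 ?invr_neq0 ?expf_neq0 //.
by apply: contra Rs_neq0 => /eqP g_s; rewrite horner_curve_poly // g_s mul0r.
Qed.
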